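(* In the adaptive clinching auction for one infinitely divisible good (described in the context), with stopping time $f$, the following hold: (1) at any time $t$, if $C(t)\ne\emptyset$ then $C(t)=\{j\in A(t): b_j(t)=b_{\max}(t)\}$, where $b_{\max}(t)=\max_{i\in A(t)}b_i(t)$; (2) for all $t<f$ and all bidders $i$, $S(t)\le D_{-i}(t)$ (the Supply Invariant); and (3) when a bidder $i$ that belongs to the clinching set $C(t)$ drops out of the clinching set, the auction stops at that time.
   Context: One unit of an infinitely divisible good is sold to $n$ bidders; bidder $i$ reports valuation $v_i$ per unit and budget $B_i>0$. The adaptive clinching auction is a process indexed by time $t\ge0$, with price $p(t)$, effective budgets $b_i(t)$, allocations $x_i(t)$, payments $P_i(t)$, and supply $S(t)=1-\sum_ix_i(t)$; initially $p(0)=0$, $x_i(0)=P_i(0)=0$, $b_i(0)=B_i$, $S(0)=1$. Demand $D_i(t)=b_i(t)/p(t)$ and $D_{-i}(t)=\sum_{j\ne i}D_j(t)$. Active set $A(t)=\{j:v_j>p(t),b_j(t)>0\}$, exiting set $E(t)=\{j:v_j=p(t),b_j(t)>0\}$, clinching set $C(t)=\{j\in A(t):S(t)=D_{-j}(t)\}$. With a fixed report-independent ordering of the bidders, the rules (primes are time derivatives; unmentioned quantities are constant) are: (I) if $\sum_{i\in A(t)}D_i(t)\le S(t)$, stop at time $f=t$ and, at unit price $p(t)$ respecting budgets, give each $i\in A(t)$ amount $D_i(t)$ and give the remaining $S(t)-\sum_{i\in A(t)}D_i(t)$ to bidders in $E(t)$; (II) else if $E(t)=\emptyset\ne A(t)$: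 $p'=1$, and for $i\in C(t)$: $b_i'=-S(t)$, $P_i'=S(t)$, $x_i'=S(t)/p(t)$; (III) else if $E(t)\ne\emptyset\ne A(t)$: $p'=0$; for the smallest-index $j\in E(t)$: $b_j'=-1$, $P_j'=x_j'=0$; for $i\in C(t)$: $b_i'=-1$, $P_i'=1$, $x_i'=1/p(t)$. *)

From HB Require Import structures.
From mathcomp Require Import all_boot all_order all_algebra.
From mathcomp Require Import all_classical all_reals all_analysis.
Set Implicit Arguments. Unset Strict Implicit. Unset Printing Implicit Defensive.
Import Order.TTheory GRing.Theory Num.Theory.
Import numFieldNormedType.Exports.
Local Open Scope ring_scope.
Local Open Scope classical_set_scope.
Local Open Scope ring_scope.

Definition rderiv {R : realType} (g : R -> R) (t d : R) : Prop :=
  ((fun h : R => h^-1 * (g (t + h) - g t)) @ at_right 0 --> d)%classic.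

Section Auction.
Context {R : realType} {n : nat}.
Context (v : 'I_n -> R).
Context (p : R -> R) (b x : 'I_n -> R -> R).

Definition supply (t : R) : R := 1 - \sum_(i < n) x i t.

(* Demand b/p, valued in the extended reals: b/p if p > 0; at price 0 a
   positive budget gives infinite demand (and 0/0 is read as 0). *)
Definition demand (pr bi : R) : \bar R :=
  if 0 < pr then (bi / pr)%:E else if 0 < bi then +oo%E else 0%E.

Definition D (i : 'I_n) (t : R) : \bar R := demand (p t) (b i t).

Definition Dminus (i : 'I_n) (t : R) : \bar R :=
  (\sum_(j < n | j != i) D j t)%E.

Definition active (t : R) : {set 'I_n} :=
  [set j | (p t < v j) && (0 < b j t)]%SET.

Definition exiting (t : R) : {set 'I_n} :=
  [set j | (v j == p t) && (0 < b j t)]%SET.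

Definition clinching (t : R) : {set 'I_n} :=
  [set j in active t | (supply t)%:E == Dminus j t]%SET.

(* b_max(t) = max_{i in A(t)} b_i(t)  (budgets in A(t) are positive) *)
Definition bmax (t : R) : R := \big[Num.max/0]_(i in active t) b i t.

(* the stopping condition of rule (I) *)
Definition stop_cond (t : R) : Prop :=
  ((\sum_(i in active t) D i t)%E <= (supply t)%:E)%E.

(* j is the smallest-index exiting bidder (fixed ordering = index order) *)
Definition first_exiting (t : R) (j : 'I_n) : bool :=
  (j \in exiting t) && [forall k in exiting t, (j <= k)%N].

End Auction.

Definition clinching_auction {R : realType} {n : nat} (v B : 'I_n -> R)
    (f : R) (p : R -> R) (b x P : 'I_n -> R -> R) : Prop :=
  [/\ 0 <= f,
      p 0 = 0 /\ (forall i, [/\ x i 0 = 0, P i 0 = 0 & b i 0 = B i]),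
      {within `[0, f]%classic, continuous p} /\
      (forall i, [/\ {within `[0, f]%classic, continuous (b i)},
                     {within `[0, f]%classic, continuous (x i)} &
                     {within `[0, f]%classic, continuous (P i)}]),
      (forall t, 0 <= t < f ->
         [/\ ~ stop_cond v p b x t,
             active v p b t != finset.set0 &
             if exiting v p b t == finset.set0 then
               (* rule (II) *)
               rderiv p t 1 /\
               (forall i, if i \in clinching v p b x t then
                    [/\ rderiv (b i) t (- supply x t),
                        rderiv (P i) t (supply x t) &
                        rderiv (x i) t (supply x t / p t)]
                  else [/\ rderiv (b i) t 0, rderiv (P i) t 0 &
                           rderiv (x i) t 0])
             else
               (* rule (III) *)
               rderiv p t 0 /\
               (forall i, if i \in clinching v p b x t then
                    [/\ rderiv (b i) t (-1),
                        rderiv (P i) t 1 &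
                        rderiv (x i) t (1 / p t)]
                  else if first_exiting v p b t i then
                    [/\ rderiv (b i) t (-1), rderiv (P i) t 0 &
                        rderiv (x i) t 0]
                  else [/\ rderiv (b i) t 0, rderiv (P i) t 0 &
                           rderiv (x i) t 0])]) &
      stop_cond v p b x f].

From HB Require Import structures.
From mathcomp Require Import all_boot all_order all_algebra.
From mathcomp Require Import all_classical all_reals all_analysis.
From mathcomp Require Import ring lra.
Import Order.TTheory GRing.Theory Num.Theory.
Import numFieldNormedType.Exports.

(* For bidder [i] consider [excess i t = p(t) S(t) - sum_(j <> i) b_j(t)].
   When the price is positive, the Supply Invariant for [i] is [excess i <= 0],
   and [i] clinches exactly when it is active and [excess i = 0].  Under rules
   (II) and (III) every [excess i] has a nonnegative right derivative, and it
   starts negative.  Were it ever positive, at its last zero [z] bidder [i]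
   clinches while right after [z] it does not; so [x_i] is frozen and its rate
   at [z] vanishes, which only happens in rule (II) with [S(z) = 0].  The
   supply is nonincreasing, so it stays 0, which forces [excess i <= 0].
   Part (1) follows since two excesses differ by the difference of the
   budgets.  For part (3), after [s] the excess of [i] is squeezed to 0 by
   monotonicity and the invariant, so a non-clinching [i] must be inactive;
   but before [f] an inactive bidder has negative excess. *)

Set Implicit Arguments. Unset Strict Implicit. Unset Printing Implicit Defensive.
Local Open Scope ring_scope.
Local Open Scope classical_set_scope.

Lemma ler_sum_term (R : numDomainType) (I : finType) (P : pred I) (F : I -> R) j :
  P j -> (forall k, P k -> 0 <= F k) -> F j <= \sum_(k | P k) F k.
Proof.
move=> Pj F_ge0; rewrite (bigD1 j) //= lerDl sumr_ge0 // => k /andP[Pk _].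
exact: F_ge0.
Qed.

Section RightDerivative.
Variable R : realType.
Implicit Types (g : R -> R) (c d e t : R).

Lemma rderiv_cvg_right g t d :
  rderiv g t d -> (fun h => g (t + h)) @ (0:R)^'+ --> g t.
Proof.
move=> dg.
have -> : (fun h => g (t + h)) = (fun h => g t + h * (h^-1 * (g (t + h) - g t))).
  apply/funext => h; have [->|h0] := eqVneq h 0; first by rewrite addr0 mul0r addr0.
  by rewrite mulrA mulfV // mul1r addrCA subrr addr0.
rewrite -[X in _ --> X]addr0; apply: cvgD; first exact: cvg_cst.
suff : (fun h => h * (h^-1 * (g (t + h) - g t))) @ (0:R)^'+ --> 0 * d by rewrite mul0r.
apply: cvgM => //; apply: cvg_at_right_filter; exact: cvg_id.
Qed.

Lemma rderiv_right_cst g t d e c : rderiv g t d -> 0 < e ->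
  (forall h, 0 < h <= e -> g (t + h) = c) -> d = 0.
Proof.
move=> dg e_gt0 gc.
have near_c : \forall h \near (0:R)^'+, g (t + h) = c.
  near=> h; apply: gc; apply/andP; split; near: h;
    [exact: nbhs_right_gt | exact: nbhs_right_le].
have gtc : g t = c.
  have cvg_c : (fun h => g (t + h)) @ (0:R)^'+ --> c by exact: cvg_near_cst.
  exact: (cvg_unique _ (rderiv_cvg_right dg) cvg_c).
have cvg0 : (fun h => h^-1 * (g (t + h) - g t)) @ (0:R)^'+ --> (0:R).
  by apply: cvg_near_cst; apply: filterS near_c => h ->; rewrite gtc subrr mulr0.
exact: (cvg_unique _ dg cvg0).
Unshelve. all: by end_near.
Qed.

Lemma rderiv_cst c t : rderiv (fun=> c) t 0.
Proof.
rewrite /rderiv (_ : (fun h : R => h^-1 * (c - c)) = fun=> 0); first exact: cvg_cst.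
by apply/funext => h; rewrite subrr mulr0.
Qed.

Lemma rderivN g t d : rderiv g t d -> rderiv (fun s => - g s) t (- d).
Proof.
move=> dg; rewrite /rderiv.
have -> : (fun h => h^-1 * (- g (t + h) - - g t)) =
    (fun h => - (h^-1 * (g (t + h) - g t))) by apply/funext => h /=; ring.
exact: cvgN.
Qed.

Lemma rderivD g1 g2 t d1 d2 : rderiv g1 t d1 -> rderiv g2 t d2 ->
  rderiv (fun s => g1 s + g2 s) t (d1 + d2).
Proof.
move=> dg1 dg2; rewrite /rderiv.
have -> : (fun h => h^-1 * (g1 (t + h) + g2 (t + h) - (g1 t + g2 t))) =
    (fun h => h^-1 * (g1 (t + h) - g1 t) + h^-1 * (g2 (t + h) - g2 t)).
  by apply/funext => h /=; ring.
exact: cvgD.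
Qed.

Lemma rderivM g1 g2 t d1 d2 : rderiv g1 t d1 -> rderiv g2 t d2 ->
  rderiv (fun s => g1 s * g2 s) t (d1 * g2 t + g1 t * d2).
Proof.
move=> dg1 dg2; rewrite /rderiv.
have -> : (fun h => h^-1 * (g1 (t + h) * g2 (t + h) - g1 t * g2 t)) =
    (fun h => h^-1 * (g1 (t + h) - g1 t) * g2 t +
              g1 (t + h) * (h^-1 * (g2 (t + h) - g2 t))).
  by apply/funext => h /=; ring.
apply: cvgD; apply: cvgM => //; [exact: cvg_cst | exact: rderiv_cvg_right dg1].
Qed.

Lemma rderiv_sum (I : finType) (P : pred I) (F : I -> R -> R) (d : I -> R) t :
  (forall j, P j -> rderiv (F j) t (d j)) ->
  rderiv (fun s => \sum_(j | P j) F j s) t (\sum_(j | P j) d j).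
Proof.
move=> dF; rewrite /rderiv.
have -> : (fun h => h^-1 * (\sum_(j | P j) F j (t + h) - \sum_(j | P j) F j t)) =
    (fun h => \sum_(j | P j) (h^-1 * (F j (t + h) - F j t))).
  by apply/funext => h; rewrite -sumrB mulr_sumr.
apply: cvg_big => //; exact: add_continuous.
Qed.

End RightDerivative.

Section ContinuousOn.
Variable R : realType.
Implicit Types (A B : set R) (g : R -> R).

(* Pointwise form of [{within A, continuous g}], which combines directly with
   [cvgD], [cvgM], ... *)
Definition continuous_on A g := forall x, A x -> g @ within A (nbhs x) --> g x.

Lemma continuous_onP A g : {within A, continuous g} <-> continuous_on A g.
Proof. exact: subspace_continuousP. Qed.

Lemma sub_continuous_on A B g :
  A `<=` B -> continuous_on B g -> continuous_on A g.
Proof. by move=> AB /continuous_onP/(continuous_subspaceW AB)/continuous_onP. Qed.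

Lemma continuous_on_id A : continuous_on A id.
Proof. by move=> x _; apply: cvg_within_filter; exact: cvg_id. Qed.

Lemma continuous_on_cst A (c : R) : continuous_on A (fun=> c).
Proof. by move=> x _; exact: cvg_cst. Qed.

Lemma continuous_onN A g : continuous_on A g -> continuous_on A (fun s => - g s).
Proof. by move=> gC x Ax; exact: cvgN (gC x Ax). Qed.

Lemma continuous_onD A g1 g2 : continuous_on A g1 -> continuous_on A g2 ->
  continuous_on A (fun s => g1 s + g2 s).
Proof. by move=> g1C g2C x Ax; exact: cvgD (g1C x Ax) (g2C x Ax). Qed.

Lemma continuous_onM A g1 g2 : continuous_on A g1 -> continuous_on A g2 ->
  continuous_on A (fun s => g1 s * g2 s).
Proof. by move=> g1C g2C x Ax; exact: cvgM (g1C x Ax) (g2C x Ax). Qed.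

Lemma continuous_on_sum A (I : finType) (P : pred I) (F : I -> R -> R) :
  (forall j, P j -> continuous_on A (F j)) ->
  continuous_on A (fun s => \sum_(j | P j) F j s).
Proof.
move=> FC x Ax; apply: cvg_big => [|j Pj]; [exact: add_continuous | exact: FC].
Qed.

Lemma subset_itv_cc (a c a' c' : R) :
  a' <= a -> c <= c' -> `[a, c] `<=` `[a', c'].
Proof. by move=> a'a cc'; apply: subset_itv; rewrite bnd_simp. Qed.

Lemma near_right_ex (Q : R -> Prop) (c : R) : 0 < c ->
  (\forall h \near (0:R)^'+, Q h) -> exists h, 0 < h <= c /\ Q h.
Proof.
move=> c_gt0 nearQ.
have : \forall h \near (0:R)^'+, [/\ 0 < h, h <= c & Q h].
  near=> h; split; near: h; [exact: nbhs_right_gt | exact: nbhs_right_le | exact: nearQ].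
by case/filter_ex => h [h_gt0 hc Qh]; exists h; rewrite h_gt0 hc.
Unshelve. all: by end_near.
Qed.

Lemma near_within_ball A x (Q : R -> Prop) :
  (\forall y \near within A (nbhs x), Q y) ->
  exists2 e, 0 < e & forall y, A y -> `|x - y| < e -> Q y.
Proof. by move=> /nbhs_ballP[e e_gt0 eQ]; exists e => // y Ay xy; exact: eQ. Qed.

End ContinuousOn.

Section RightDerivativeMonotone.
Variable R : realType.
Implicit Types (g : R -> R) (a c : R).

(* If [g c < g a], the maximum of [t |-> g t + e (t - a)] on [[a, c]], for a
   small [e > 0], is attained before [c]; there its right derivative is at
   least [e], so it still increases just after the maximum. *)
Lemma ger0_rderiv_ndecr g a c : a <= c -> continuous_on `[a, c] g ->
  (forall t, a <= t < c -> exists2 d, 0 <= d & rderiv g t d) -> g a <= g c.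
Proof.
move=> ac gC dg; rewrite leNgt; apply/negP => gca.
have {}ac : a < c by rewrite lt_neqAle ac andbT; apply: contraTneq gca => ->; rewrite ltxx.
pose e := (g a - g c) / (c - a) / 2.
have e_gt0 : 0 < e by rewrite /e !divr_gt0 // subr_gt0.
pose H t := g t + e * (t - a).
have HC : {within `[a, c], continuous H}.
  apply/continuous_onP/continuous_onD => //; apply: continuous_onM.
    exact: continuous_on_cst.
  by apply: continuous_onD; [exact: continuous_on_id | exact: continuous_on_cst].
have [M] := EVT_max (ltW ac) HC; rewrite in_itv /= => /andP[aM Mc] Hmax.
have Hca : H c < H a.
  rewrite /H subrr mulr0 addr0 /e.
  have -> : (g a - g c) / (c - a) / 2 * (c - a) = (g a - g c) / 2.
    by field; rewrite subr_eq0 gt_eqF.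
  lra.
have Mc' : M < c.
  rewrite lt_neqAle Mc andbT; apply/eqP => Mc'.
  by have := Hmax a; rewrite in_itv /= lexx (ltW ac) Mc' => /(_ isT); lra.
have [d d_ge0 dgM] := dg M (introT andP (conj aM Mc')).
have [|h [/andP[h_gt0 hc] Hq]] := near_right_ex (_ : 0 < c - M) (cvgr_gt _ dgM (- e) ltac:(lra)).
  by lra.
have := Hmax (M + h); rewrite in_itv /= => /(_ ltac:(apply/andP; split; lra)).
rewrite /H.
have : g (M + h) - g M = h * (h^-1 * (g (M + h) - g M)).
  by rewrite mulrA mulfV ?mul1r // gt_eqF.
move: Hq; set q := h^-1 * _ => Hq Hgq.
nra.
Qed.

Lemma rderiv0_cst g a c : a <= c -> continuous_on `[a, c] g ->
  (forall t, a <= t < c -> rderiv g t 0) -> g c = g a.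
Proof.
move=> ac gC dg; apply/eqP; rewrite eq_le; apply/andP; split.
  rewrite -lerN2; apply: (ger0_rderiv_ndecr ac (continuous_onN gC)) => t /dg.
  by move/rderivN; rewrite oppr0 => ?; exists 0.
by apply: ger0_rderiv_ndecr => // t /dg ?; exists 0.
Qed.

Lemma last_zero g a c : a <= c -> continuous_on `[a, c] g -> g a <= 0 -> 0 < g c ->
  exists t0, [/\ a <= t0, t0 < c, g t0 = 0 & forall t, t0 < t <= c -> 0 < g t].
Proof.
move=> ac gC ga gc.
pose Z := [set t | a <= t <= c /\ g t <= 0].
have Za : Z a by split => //; rewrite lexx ac.
have ubZ : ubound Z c by move=> t [/andP[_ ?] _].
have supZ : has_sup Z by split; [exists a | exists c].
pose t0 := sup Z.
have at0 : a <= t0 := sup_upper_bound supZ Za.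
have t0c : t0 <= c := ge_sup (ex_intro _ a Za) ubZ.
have t0_itv : `[a, c] t0 by rewrite /= in_itv /= at0 t0c.
have after t : t0 < t <= c -> 0 < g t.
  case/andP=> t0t tc; rewrite ltNge; apply/negP => gt.
  have : Z t by split => //; rewrite tc andbT (le_trans at0) // ltW.
  by move/(sup_upper_bound supZ); rewrite -/t0; lra.
have g_le0 : g t0 <= 0.
  rewrite leNgt; apply/negP => g_gt0.
  have [r r_gt0 near_t0] := near_within_ball (cvgr_gt _ (gC t0 t0_itv) _ g_gt0).
  have [z [/andP[az zc] gz] t0z] := sup_adherent r_gt0 supZ.
  have zt0 : z <= t0 by apply: sup_upper_bound => //; rewrite /Z /= az zc.
  suff : 0 < g z by lra.
  apply: near_t0; first by rewrite /= in_itv /= az zc.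
  by rewrite ger0_norm ?subr_ge0 //; rewrite -/t0 in t0z; lra.
have t0c' : t0 < c by rewrite lt_neqAle t0c andbT; apply: contraTneq g_le0 => ->; rewrite -ltNge.
have g_ge0 : 0 <= g t0.
  rewrite leNgt; apply/negP => g_lt0.
  have t0cC : {within `[t0, c], continuous g}.
    by apply/continuous_onP/(sub_continuous_on _ gC)/subset_itv_cc.
  have bounds : Num.min (g t0) (g c) <= 0 <= Num.max (g t0) (g c).
    by rewrite ge_min le_max (ltW g_lt0) (ltW gc) orbT.
  have [z] := IVT (ltW t0c') t0cC bounds.
  rewrite in_itv /= => /andP[t0z zc] gz.
  have t0z' : t0 < z.
    by rewrite lt_neqAle t0z andbT; apply: contraTneq g_lt0 => ->; rewrite gz ltxx.
  by have := after z; rewrite t0z' zc gz ltxx => /(_ isT).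
by exists t0; split => //; apply/eqP; rewrite eq_le g_le0.
Qed.

Lemma ge0_rderiv_barrier g a c : continuous_on `[a, c] g -> 0 <= g a ->
  (forall t, a <= t < c -> g t <= 0 -> rderiv g t 0) ->
  forall t, a <= t <= c -> 0 <= g t.
Proof.
move=> gC ga dg t /andP[a_t tc]; rewrite leNgt; apply/negP => gt.
have [t0 [at0 t0t g0 after]] := last_zero a_t
  (continuous_onN (sub_continuous_on (subset_itv_cc (lexx a) tc) gC))
  ltac:(simpl; lra) ltac:(simpl; lra).
have : g t = g t0.
  apply: rderiv0_cst; first exact: ltW.
    by apply: sub_continuous_on gC; apply: subset_itv_cc.
  move=> s /andP[t0s st]; apply: dg; first by rewrite (le_trans at0) //= (lt_le_trans st).
  have [->|ne] := eqVneq s t0; first by move: g0 => /=; lra.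
  by have := after s; rewrite (ltW st) andbT lt_neqAle eq_sym ne t0s => /(_ isT) /=; lra.
by move: g0 => /= g0; lra.
Qed.

End RightDerivativeMonotone.

Section ClinchingAuction.
Variables (R : realType) (n : nat) (v B : 'I_n -> R) (f : R) (p : R -> R)
  (b x P : 'I_n -> R -> R).
Hypotheses (n_ge2 : (2 <= n)%N) (v_gt0 : forall i, 0 < v i)
  (B_gt0 : forall i, 0 < B i) (auction : clinching_auction v B f p b x P).

Local Notation A := (active v p b).
Local Notation E := (exiting v p b).
Local Notation C := (clinching v p b x).
Local Notation S := (supply x).

Definition price_rate t : R := if E t == finset.set0 then 1 else 0.

Definition alloc_rate t j : R :=
  if j \in C t then (if E t == finset.set0 then S t / p t else 1 / p t) else 0.

(* [first_exiting] never holds under rule (II), where no bidder is exiting. *)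
Definition budget_rate t j : R :=
  if j \in C t then (if E t == finset.set0 then - S t else -1)
  else if first_exiting v p b t j then -1 else 0.

Lemma f_ge0 : 0 <= f. Proof. by case: auction. Qed.
Lemma price0 : p 0 = 0. Proof. by case: auction => _ []. Qed.
Lemma alloc0 i : x i 0 = 0. Proof. by case: auction => _ [_ /(_ i) []]. Qed.
Lemma budget0 i : b i 0 = B i. Proof. by case: auction => _ [_ /(_ i) []]. Qed.
Lemma stop_at_f : stop_cond v p b x f. Proof. by case: auction. Qed.

Lemma continuous_on_price : continuous_on `[0, f] p.
Proof. by case: auction => _ _ [/continuous_onP]. Qed.

(* [continuous_on] unfolds to a product whose conclusion mentions [i], which
   would otherwise make [i] implicit. *)
Lemma continuous_on_budget i : continuous_on `[0, f] (b i).
Proof. by case: auction => _ _ [_ /(_ i) [/continuous_onP]]. Qed.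
Arguments continuous_on_budget : clear implicits.

Lemma continuous_on_alloc i : continuous_on `[0, f] (x i).
Proof. by case: auction => _ _ [_ /(_ i) [_ /continuous_onP]]. Qed.
Arguments continuous_on_alloc : clear implicits.

Lemma auction_rates t : 0 <= t < f ->
  [/\ ~ stop_cond v p b x t, A t != finset.set0, rderiv p t (price_rate t) &
      forall j, rderiv (b j) t (budget_rate t j) /\ rderiv (x j) t (alloc_rate t j)].
Proof.
move=> ht; case: auction => _ _ _ /(_ t ht) [not_stop A_neq0] + _.
rewrite /price_rate /budget_rate /alloc_rate.
case: ifP => [/eqP E0|_] [dp db]; split => // j; have := db j.
  case: ifP => _ [? ? ?] //; rewrite (_ : first_exiting _ _ _ t j = false) //.
  by apply/negbTE/negP => /andP[]; rewrite E0 inE.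
by case: ifP => _ //; [case | case: ifP => _ []].
Qed.

Lemma in_active t j : j \in A t -> p t < v j /\ 0 < b j t.
Proof. by rewrite inE => /andP[]. Qed.

Lemma in_exiting t j : j \in E t -> v j = p t /\ 0 < b j t.
Proof. by rewrite inE => /andP[/eqP]. Qed.

Lemma clinching_active t j : j \in C t -> j \in A t.
Proof. by rewrite inE => /andP[]. Qed.

Lemma first_exiting_exiting t j : first_exiting v p b t j -> j \in E t.
Proof. by case/andP. Qed.

Lemma exists_first_exiting t : E t != finset.set0 -> exists j, first_exiting v p b t j.
Proof.
case/set0Pn => j0 j0E; exists [arg min_(j < j0 in E t) (j : nat)].
case: arg_minnP => // j jE jmin; rewrite /first_exiting jE /=.
by apply/forallP => k; apply/implyP; exact: jmin.
Qed.

Lemma exists_other i : exists j : 'I_n, j != i.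
Proof.
have [->|ne] := eqVneq i (Ordinal (ltnW n_ge2)); last first.
  by exists (Ordinal (ltnW n_ge2)); rewrite eq_sym.
by exists (Ordinal n_ge2); apply/eqP => /(congr1 val).
Qed.

Lemma demand0 j : D p b j 0 = +oo%E.
Proof. by rewrite /D /demand price0 ltxx budget0 B_gt0. Qed.

Lemma Dminus0 i : Dminus p b i 0 = +oo%E.
Proof.
have [k ki] := exists_other i.
apply/esum_eqyP => [j _|]; first by rewrite demand0.
by exists k; rewrite mem_index_enum ki demand0.
Qed.

Lemma not_stop0 : ~ stop_cond v p b x 0.
Proof.
rewrite /stop_cond (_ : (\sum_(i in A 0) _)%E = +oo%E) ?leye_eq //.
apply/esum_eqyP => [j _|]; first by rewrite demand0.
exists (Ordinal (ltnW n_ge2)); rewrite mem_index_enum demand0 inE price0.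
by rewrite v_gt0 budget0 B_gt0.
Qed.

Lemma f_gt0 : 0 < f.
Proof.
rewrite lt_neqAle f_ge0 andbT; apply/eqP => f0; apply: not_stop0.
by rewrite f0; exact: stop_at_f.
Qed.

Lemma exiting0 : E 0 = finset.set0.
Proof. by apply/setP => j; rewrite !inE price0 gt_eqF. Qed.

Lemma price_ndecr s t : 0 <= s -> s <= t -> t <= f -> p s <= p t.
Proof.
move=> s0 st tf; apply: ger0_rderiv_ndecr => //.
  exact: sub_continuous_on (subset_itv_cc s0 tf) continuous_on_price.
move=> u /andP[su ut].
have [_ _ dp _] := auction_rates (introT andP (conj (le_trans s0 su) (lt_le_trans ut tf))).
by exists (price_rate u) => //; rewrite /price_rate; case: ifP.
Qed.

(* Rule (II) is in force at time 0, so the price leaves 0 with slope 1. *)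
Lemma price_gt0 t : 0 < t -> t <= f -> 0 < p t.
Proof.
move=> t_gt0 tf.
have [_ _ dp _] := auction_rates (introT andP (conj (lexx 0) f_gt0)).
move: dp; rewrite /price_rate exiting0 eqxx => dp.
have [h [/andP[h_gt0 ht] ph]] := near_right_ex t_gt0 (cvgr_gt _ dp (1/2) ltac:(lra)).
move: ph; rewrite add0r price0 subr0 => ph.
have hV_gt0 : 0 < h^-1 by rewrite invr_gt0.
have ph_gt0 : 0 < p h by nra.
by apply: (lt_le_trans ph_gt0); apply: price_ndecr => //; exact: ltW.
Qed.

Lemma clinching_time_gt0 t j : 0 <= t -> j \in C t -> 0 < t.
Proof.
move=> t0 jC; rewrite lt_neqAle t0 andbT; apply: contraTneq jC => <-.
by rewrite inE Dminus0 andbF.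
Qed.

Lemma clinching_price_gt0 t j : 0 <= t <= f -> j \in C t -> 0 < p t.
Proof. by case/andP=> t0 tf jC; apply: price_gt0 (clinching_time_gt0 t0 jC) tf. Qed.

Lemma budget_ge0 j t : 0 <= t <= f -> 0 <= b j t.
Proof.
move: t; apply: (ge0_rderiv_barrier (continuous_on_budget j)).
  by rewrite budget0 ltW.
move=> u hu bu; have [_ _ _ /(_ j) [db _]] := auction_rates hu.
suff <- : budget_rate u j = 0 by [].
rewrite /budget_rate; case: ifP => [/clinching_active/in_active|_]; first lra.
by case: ifP => // /first_exiting_exiting/in_exiting; lra.
Qed.

Lemma sum_budget_ge0 t (Q : pred 'I_n) : 0 <= t <= f -> 0 <= \sum_(k | Q k) b k t.
Proof. by move=> ht; apply: sumr_ge0 => k _; exact: budget_ge0. Qed.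

Lemma sum_demand t (Q : pred 'I_n) : 0 < p t ->
  (\sum_(j | Q j) D p b j t)%E = ((\sum_(j | Q j) b j t) / p t)%:E.
Proof.
move=> pt; rewrite (eq_bigr (fun j => (b j t / p t)%:E)) => [|j _].
  by rewrite sumEFin mulr_suml.
by rewrite /D /demand pt.
Qed.

Definition excess i t := p t * S t - \sum_(j | j != i) b j t.

Lemma excessE i t : excess i t = p t * S t - \sum_j b j t + b i t.
Proof. by rewrite /excess [in RHS](bigD1 i) //=; ring. Qed.

Lemma clinchingE t i : 0 < p t -> (i \in C t) = (i \in A t) && (excess i t == 0).
Proof.
move=> pt; rewrite inE /Dminus sum_demand // eqe /excess subr_eq0.
congr (_ && _); apply/eqP/eqP => [->|<-]; by field; rewrite gt_eqF.
Qed.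

Lemma clinching_supply_eq t i : 0 < p t -> i \in C t ->
  p t * S t = \sum_(j | j != i) b j t.
Proof. by move=> pt; rewrite clinchingE // /excess subr_eq0 => /andP[_ /eqP]. Qed.

Lemma clinching_supply_ge0 t i : 0 <= t <= f -> i \in C t -> 0 <= S t.
Proof.
move=> ht iC; have pt := clinching_price_gt0 ht iC.
by rewrite -(pmulr_rge0 _ pt) (clinching_supply_eq pt iC) sum_budget_ge0.
Qed.

Lemma clinching_supply_gt0 t i : 0 <= t <= f -> i \in C t ->
  E t != finset.set0 -> 0 < S t.
Proof.
move=> ht iC /set0Pn[k kE]; have pt := clinching_price_gt0 ht iC.
have [vk bk] := in_exiting kE; have [pvi _] := in_active (clinching_active iC).
have ki : k != i by apply: contraTneq pvi => <-; rewrite vk ltxx.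
rewrite -(pmulr_rgt0 _ pt) (clinching_supply_eq pt iC).
apply: lt_le_trans bk (ler_sum_term (P := fun j => j != i) (F := b^~ t) ki _) => j _.
exact: budget_ge0.
Qed.

Lemma supply0 : S 0 = 1.
Proof. by rewrite /supply big1 ?subr0 // => j _; exact: alloc0. Qed.

Lemma continuous_on_supply : continuous_on `[0, f] S.
Proof.
apply: continuous_onD; first exact: continuous_on_cst.
by apply/continuous_onN/continuous_on_sum => j _; exact: continuous_on_alloc.
Qed.

Lemma rderiv_supply t : 0 <= t < f -> rderiv S t (- \sum_j alloc_rate t j).
Proof.
move=> ht; have [_ _ _ dbx] := auction_rates ht.
have := rderivD (rderiv_cst 1 t) (rderivN (rderiv_sum (fun j (_ : true) => (dbx j).2))).
by rewrite add0r.
Qed.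

(* The supply can only reach 0 in rule (II): in rule (III) a clinching bidder
   faces the positive budget of the exiting bidder. *)
Lemma supply_ge0 t : 0 <= t <= f -> 0 <= S t.
Proof.
move: t; apply: (ge0_rderiv_barrier continuous_on_supply).
  by rewrite supply0.
move=> u hu Su; have := rderiv_supply hu.
suff -> : \sum_j alloc_rate u j = 0 by rewrite oppr0.
have hu' : 0 <= u <= f by case/andP: hu => -> /ltW.
apply: big1 => j _; rewrite /alloc_rate; case: ifP => // jC; case: ifP => E0.
  have := clinching_supply_ge0 hu' jC => S_ge0.
  by rewrite (_ : S u = 0) ?mul0r //; lra.
by have := clinching_supply_gt0 hu' jC (negbT E0); lra.
Qed.

Lemma alloc_rate_ge0 t j : 0 <= t <= f -> 0 <= alloc_rate t j.
Proof.
move=> ht; rewrite /alloc_rate; case: ifP => // jC.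
have pt := clinching_price_gt0 ht jC.
by case: ifP => _; apply: divr_ge0; [exact: supply_ge0 | exact: ltW | exact: ler01 | exact: ltW].
Qed.

Lemma supply_nincr s t : 0 <= s -> s <= t -> t <= f -> S t <= S s.
Proof.
move=> s0 st tf; have := @ger0_rderiv_ndecr _ (fun u => - S u) s t st.
rewrite lerN2; apply.
  exact: continuous_onN (sub_continuous_on (subset_itv_cc s0 tf) continuous_on_supply).
move=> u /andP[su ut].
have hu : 0 <= u < f by rewrite (le_trans s0 su) (lt_le_trans ut tf).
exists (\sum_j alloc_rate u j); last by rewrite -[X in rderiv _ _ X]opprK; exact: rderivN (rderiv_supply hu).
by apply: sumr_ge0 => j _; apply: alloc_rate_ge0; case/andP: hu => -> /ltW.
Qed.

Definition excess_rate i t := price_rate t * S t - p t * \sum_j alloc_rate t j -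
  \sum_(j | j != i) budget_rate t j.

Lemma continuous_on_excess i : continuous_on `[0, f] (excess i).
Proof.
apply: continuous_onD.
  exact: continuous_onM continuous_on_price continuous_on_supply.
by apply/continuous_onN/continuous_on_sum => j _; exact: continuous_on_budget.
Qed.
Arguments continuous_on_excess : clear implicits.

Lemma rderiv_excess i t : 0 <= t < f -> rderiv (excess i) t (excess_rate i t).
Proof.
move=> ht; have [_ _ dp dbx] := auction_rates ht.
have := rderivD (rderivM dp (rderiv_supply ht))
  (rderivN (rderiv_sum (fun j (_ : j != i) => (dbx j).1))).
by rewrite /excess_rate mulrN.
Qed.

Lemma clinching_rates t j : 0 < p t -> j \in C t ->
  p t * alloc_rate t j = - budget_rate t j.
Proof.
move=> pt jC; rewrite /alloc_rate /budget_rate jC.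
by case: ifP => _; field; rewrite gt_eqF.
Qed.

Lemma budget_rate_le0 t j : 0 <= S t -> budget_rate t j <= 0.
Proof. by move=> S_ge0; rewrite /budget_rate; case: ifP => _; case: ifP => _; lra. Qed.

Lemma sum_nonclinching_budget_rate t i : 0 <= t <= f -> i \in C t ->
  E t != finset.set0 ->
  \sum_(j | j != i) (if j \in C t then 0 else budget_rate t j) <= -1.
Proof.
move=> ht iC /exists_first_exiting[k kfirst].
have [vk _] := in_exiting (first_exiting_exiting kfirst).
have kC : k \notin C t.
  by apply/negP => /clinching_active/in_active[+ _]; rewrite vk ltxx.
have ki : k != i by apply: contraNneq kC => ->.
rewrite (bigD1 k) //= (negbTE kC) /budget_rate (negbTE kC) kfirst gerDl.
apply: sumr_le0 => j _; case: ifP => // _; apply: budget_rate_le0.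
exact: supply_ge0.
Qed.

Lemma excess_rate_ge0 i t : 0 <= t < f -> 0 <= excess_rate i t.
Proof.
move=> ht; have ht' : 0 <= t <= f by case/andP: ht => -> /ltW.
have S_ge0 := supply_ge0 ht'.
have alloc_sum : p t * \sum_j alloc_rate t j =
    - \sum_j (if j \in C t then budget_rate t j else 0).
  rewrite mulr_sumr -sumrN; apply: eq_bigr => j _; case: ifP => jC.
    exact: clinching_rates (clinching_price_gt0 ht' jC) jC.
  by rewrite /alloc_rate jC mulr0 oppr0.
have split_rates : \sum_j (if j \in C t then budget_rate t j else 0) -
    \sum_(j | j != i) budget_rate t j =
    (if i \in C t then budget_rate t i else 0) -
    \sum_(j | j != i) (if j \in C t then 0 else budget_rate t j).
  rewrite (bigD1 i) //= -addrA -sumrB -sumrN; congr (_ + _); apply: eq_bigr => j _.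
  by case: ifP => _; rewrite ?subrr ?oppr0 ?sub0r.
have others_ge0 : 0 <= - \sum_(j | j != i) (if j \in C t then 0 else budget_rate t j).
  by rewrite oppr_ge0; apply: sumr_le0 => j _; case: ifP => // _; exact: budget_rate_le0.
rewrite /excess_rate alloc_sum opprK -addrA split_rates.
case: ifP => iC; last first.
  by rewrite sub0r addr_ge0 // mulr_ge0 // /price_rate; case: ifP.
rewrite /price_rate {1}/budget_rate iC; case: ifP => E0.
  by rewrite mul1r addrA addrN add0r.
by rewrite mul0r add0r subr_ge0 sum_nonclinching_budget_rate // E0.
Qed.

Lemma excess_ndecr i s t : 0 <= s -> s <= t -> t <= f -> excess i s <= excess i t.
Proof.
move=> s0 st tf; apply: ger0_rderiv_ndecr => //.
  exact: sub_continuous_on (subset_itv_cc s0 tf) (continuous_on_excess i).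
move=> u /andP[su ut].
have hu : 0 <= u < f by rewrite (le_trans s0 su) (lt_le_trans ut tf).
by exists (excess_rate i u); [exact: excess_rate_ge0 | exact: rderiv_excess].
Qed.

Lemma excess0_lt0 i : excess i 0 < 0.
Proof.
rewrite /excess price0 mul0r sub0r oppr_lt0.
have [k ki] := exists_other i.
apply: lt_le_trans (ler_sum_term (P := fun j => j != i) (F := b^~ 0) ki _) => [|j _].
  by rewrite budget0.
by rewrite budget0 ltW.
Qed.

(* Before [f] rule (I) does not apply, so the active budgets exceed [p S]. *)
Lemma excess_lt0_notin_active t i : 0 < t < f -> i \notin A t -> excess i t < 0.
Proof.
case/andP=> t_gt0 tf iA; have pt := price_gt0 t_gt0 (ltW tf).
have [not_stop _ _ _] := auction_rates (introT andP (conj (ltW t_gt0) tf)).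
have lt_active : p t * S t < \sum_(j in A t) b j t.
  rewrite ltNge; apply/negP => le_pS; apply: not_stop.
  by rewrite /stop_cond sum_demand // lee_fin ler_pdivrMr // mulrC.
have le_others : \sum_(j in A t) b j t <= \sum_(j | j != i) b j t.
  rewrite [X in X <= _]big_mkcond [X in _ <= X]big_mkcond /=.
  apply: ler_sum => j _; case: ifP => jA.
    by rewrite (_ : j != i) //; apply: contraNneq iA => <-.
  by case: ifP => // _; apply: budget_ge0; rewrite (ltW t_gt0) (ltW tf).
rewrite /excess; lra.
Qed.

(* [x i] is constant on [(z, t]], so its right derivative at [z] vanishes. *)
Lemma alloc_rate_eq0_before_gap i z t : 0 <= z -> z < t -> t <= f ->
  (forall u, z < u < t -> i \notin C u) -> alloc_rate z i = 0.
Proof.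
move=> z0 zt tf notC.
have frozen u : z < u <= t -> x i u = x i t.
  case/andP=> zu ut; apply/esym/rderiv0_cst => //.
    apply: sub_continuous_on (continuous_on_alloc i).
    by apply: subset_itv_cc => //; apply: (le_trans z0); exact: ltW.
  move=> w /andP[uw wt].
  have hw : 0 <= w < f by rewrite (le_trans z0) ?(lt_le_trans wt tf) // ltW // (lt_le_trans zu uw).
  have [_ _ _ /(_ i) [_]] := auction_rates hw.
  by rewrite /alloc_rate (negbTE (notC w _)) // (lt_le_trans zu uw) wt.
have [_ _ _ /(_ i) [_ dx]] := auction_rates (introT andP (conj z0 (lt_le_trans zt tf))).
apply: (rderiv_right_cst dx (_ : 0 < t - z)) => [|h /andP[h_gt0 ht]].
  by rewrite subr_gt0.
by apply: frozen; apply/andP; split; lra.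
Qed.

Lemma clinching_frozen_supply0 t i : 0 <= t <= f -> i \in C t ->
  alloc_rate t i = 0 -> S t = 0.
Proof.
move=> ht iC; have pt := clinching_price_gt0 ht iC.
rewrite /alloc_rate iC; case: ifP => _ /eqP; rewrite mulf_eq0 invr_eq0 (gt_eqF pt) orbF.
  by move/eqP.
by rewrite oner_eq0.
Qed.

Lemma excess_le0 i t : 0 <= t <= f -> excess i t <= 0.
Proof.
case/andP=> t0 tf; rewrite leNgt; apply/negP => e_gt0.
have eC := sub_continuous_on (subset_itv_cc (lexx 0) tf) (continuous_on_excess i).
have [z [z0 zt ez after]] := last_zero t0 eC (ltW (excess0_lt0 i)) e_gt0.
have z_gt0 : 0 < z.
  rewrite lt_def z0 andbT; apply: contraTneq (excess0_lt0 i) => z_eq0.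
  by move: ez; rewrite z_eq0 => ->; rewrite ltxx.
have zf := lt_le_trans zt tf.
have pz := price_gt0 z_gt0 (ltW zf).
have iC : i \in C z.
  rewrite clinchingE // ez eqxx andbT; apply/negPn/negP => iA.
  by have := excess_lt0_notin_active (introT andP (conj z_gt0 zf)) iA; rewrite ez ltxx.
have Sz : S z = 0.
  apply: (clinching_frozen_supply0 _ iC); first by rewrite z0 ltW.
  apply: (alloc_rate_eq0_before_gap z0 zt tf) => u /andP[zu ut].
  have pu := price_gt0 (lt_trans z_gt0 zu) (ltW (lt_le_trans ut tf)).
  rewrite clinchingE // negb_and orbC; apply/orP; left.
  by have := after u; rewrite zu (ltW ut) => /(_ isT) /gt_eqF ->.
have St : S t = 0.
  have := supply_nincr z0 (ltW zt) tf; have := supply_ge0 (introT andP (conj t0 tf)).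
  by move=> ? ?; lra.
move: e_gt0; rewrite /excess St mulr0 sub0r oppr_gt0 ltNge sum_budget_ge0 //.
by rewrite t0 tf.
Qed.

Lemma clinching_bmax t : 0 <= t <= f -> C t != finset.set0 ->
  C t = [set j in A t | b j t == bmax v p b t]%SET.
Proof.
move=> ht /set0Pn[j0 j0C]; have pt := clinching_price_gt0 ht j0C.
have e0 : excess j0 t = 0 by move: j0C; rewrite clinchingE // => /andP[_ /eqP].
have excess_diff k : excess k t = b k t - b j0 t.
  by move: e0; rewrite !excessE; set sb := \sum_j b j t; move=> e0; lra.
have le_j0 k : b k t <= b j0 t by have := excess_le0 k ht; rewrite excess_diff subr_le0.
have -> : bmax v p b t = b j0 t.
  apply/eqP; rewrite /bmax eq_le le_bigmax_cond ?clinching_active // andbT.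
  by apply/bigmax_leP; split => [|k _]; [exact: budget_ge0 | exact: le_j0].
apply/setP => j; rewrite inE clinchingE //; case: (j \in A t) => //=.
by rewrite excess_diff subr_eq0.
Qed.

Lemma supply_le_Dminus t i : 0 <= t < f -> ((S t)%:E <= Dminus p b i t)%E.
Proof.
case/andP=> t0 tf; have [->|t_neq0] := eqVneq t 0; first by rewrite Dminus0 leey.
have t_gt0 : 0 < t by rewrite lt_neqAle eq_sym t_neq0 t0.
have pt := price_gt0 t_gt0 (ltW tf).
rewrite /Dminus sum_demand // lee_fin ler_pdivlMr // mulrC -subr_le0.
by apply: excess_le0; rewrite t0 ltW.
Qed.

Lemma clinching_dropout_stops i s t : 0 <= s <= t -> t <= f ->
  i \in C s -> i \notin C t -> t = f.
Proof.
case/andP=> s0 st tf iCs iCt; apply/eqP; rewrite eq_le tf leNgt /=.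
apply/negP => tf'.
have s_gt0 := clinching_time_gt0 s0 iCs; have t_gt0 := lt_le_trans s_gt0 st.
have pt := price_gt0 t_gt0 tf.
have ps := price_gt0 s_gt0 (le_trans st tf).
have es : excess i s = 0 by move: iCs; rewrite clinchingE // => /andP[_ /eqP].
have et : excess i t < 0.
  case iA: (i \in A t); last by apply: excess_lt0_notin_active; rewrite ?t_gt0 ?tf' ?iA.
  have e_le0 := excess_le0 i (introT andP (conj (ltW t_gt0) tf)).
  rewrite lt_neqAle e_le0 andbT.
  by apply: contraNneq iCt => e0; rewrite clinchingE // iA e0 eqxx.
by have := excess_ndecr i s0 st tf; lra.
Qed.

End ClinchingAuction.

Local Close Scope classical_set_scope.
Unset Implicit Arguments.

Theorem lemma2 (R : realType) (n : nat) (v B : 'I_n -> R) (f : R)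
    (p : R -> R) (b x P : 'I_n -> R -> R) :
  (2 <= n)%N ->
  (forall i, 0 < v i) ->
  (forall i, 0 < B i) ->
  clinching_auction v B f p b x P ->
  [/\ (* (1) structure of the clinching set *)
      (forall t, 0 <= t <= f -> clinching v p b x t != finset.set0 ->
         clinching v p b x t =
           [set j in active v p b t | b j t == bmax v p b t]%SET),
      (* (2) Supply Invariant *)
      (forall t (i : 'I_n), 0 <= t < f ->
         ((supply x t)%:E <= Dminus p b i t)%E) &
      (* (3) a bidder dropping out of the clinching set stops the auction *)
      (forall (i : 'I_n) s t, 0 <= s <= t -> t <= f ->
         i \in clinching v p b x s -> i \notin clinching v p b x t ->
         t = f)].
Proof.
move=> n_ge2 v_gt0 B_gt0 auction; split.
- exact: clinching_bmax n_ge2 v_gt0 B_gt0 auction.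
- exact: supply_le_Dminus n_ge2 v_gt0 B_gt0 auction.
- exact: clinching_dropout_stops n_ge2 v_gt0 B_gt0 auction.
Qed.
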